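(* Let $F=(A,R)$ be an abstract argumentation framework and $S\subseteq A$. Then $S$ is an initial set of $F$ if and only if there is a strongly connected component $F'=(A',R')$ of $F$ with $S\subseteq A'$ such that $S$ is an initial set of $F'$ and $S^-\subseteq A'$ (where $S^-$ is computed in $F$).
   Context: An abstract argumentation framework is a pair $F=(A,R)$ with $A$ a finite set and $R\subseteq A\times A$ ($a\to b$ means $(a,b)\in R$). $S^-=\{a\in A\mid \exists b\in S: a\to b\}$. $S$ is admissible if it is conflict-free and every attacker of an element of $S$ is attacked by some element of $S$. An initial set is a non-empty admissible set with no non-empty admissible proper subset. For $X\subseteq A$, $F|_X=(X,R\cap(X\times X))$. A strongly connected component (SCC) of $F$ is a framework $F|_{A'}$ such that there is a directed path in $F|_{A'}$ between any two arguments of $A'$ and $A'$ is maximal with this property. (Every initial set lies inside a single SCC, denoted $\mathrm{SCC}(S)$ in the paper.) *)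

(* An argumentation framework is represented by a carrier
   finType T, a finite set of arguments X : {set T} and an attack relation
   R : rel T; only attacks between elements of X are relevant, so the
   framework is (X, R ∩ (X×X)). The restriction F|_Y is then simply (Y, R). *)
From mathcomp Require Import all_boot.
Set Implicit Arguments. Unset Strict Implicit. Unset Printing Implicit Defensive.

Section AF.
Variable T : finType.

Definition conflict_free (R : rel T) (S : {set T}) : Prop :=
  forall a b, a \in S -> b \in S -> ~ R a b.

Definition admissible (X : {set T}) (R : rel T) (S : {set T}) : Prop :=
  [/\ S \subset X, conflict_free R S &
      forall a b, a \in S -> b \in X -> R b a -> exists2 c, c \in S & R c b].

Definition initial_set (X : {set T}) (R : rel T) (S : {set T}) : Prop :=
  [/\ S != set0, admissible X R S &
      forall S' : {set T}, S' \proper S -> S' != set0 -> ~ admissible X R S'].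

Definition attackers_of (X : {set T}) (R : rel T) (S : {set T}) : {set T} :=
  [set a in X | [exists b in S, R a b]].

Definition restr_rel (Y : {set T}) (R : rel T) : rel T :=
  fun a b => [&& a \in Y, b \in Y & R a b].

Definition strongly_connected (Y : {set T}) (R : rel T) : Prop :=
  forall a b, a \in Y -> b \in Y -> connect (restr_rel Y R) a b.

Definition is_SCC (X : {set T}) (R : rel T) (Y : {set T}) : Prop :=
  [/\ Y \subset X, strongly_connected Y R &
      forall Z : {set T}, Y \subset Z -> Z \subset X -> strongly_connected Z R -> Z = Y].

End AF.

(* An initial set S is strongly connected inside F: the elements of S that
   reach a fixed s in S form a non-empty admissible subset, so by minimality
   they are all of S. Every attacker a of S is attacked back by S, so it lies
   on a cycle through S and hence in the SCC Y of S. Since S^- is contained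
   in Y, admissibility of subsets of S is the same in F and in F|_Y, and the
   two notions of initial set coincide. *)
From mathcomp Require Import all_boot.
Set Implicit Arguments. Unset Strict Implicit. Unset Printing Implicit Defensive.

Section InitialSets.
Variables (T : finType) (R : rel T).
Implicit Types (X Y Z S : {set T}) (s a b : T).

Definition scc_of X s : {set T} :=
  [set a in X | connect (restr_rel X R) s a && connect (restr_rel X R) a s].

Lemma scc_of_sub X s : scc_of X s \subset X.
Proof. by apply/subsetP => a; rewrite inE => /andP []. Qed.

Lemma connect_restr_sub Z X a b : Z \subset X ->
  connect (restr_rel Z R) a b -> connect (restr_rel X R) a b.
Proof.
move=> ZX; apply: connect_sub => x y /and3P [xZ yZ Rxy].
by apply: connect1; rewrite /restr_rel (subsetP ZX _ xZ) (subsetP ZX _ yZ) Rxy.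
Qed.

Lemma connect_scc_of X s a b :
  connect (restr_rel X R) s a -> connect (restr_rel X R) a b ->
  connect (restr_rel X R) b s -> connect (restr_rel (scc_of X s) R) a b.
Proof.
move=> sa /connectP [p path_p ->] {b}.
elim: p a path_p sa => [|x p IHp] a //= /andP [ax path_p] sa ps.
have xs : connect (restr_rel X R) x s.
  by apply: connect_trans ps; apply/connectP; exists p.
have sx : connect (restr_rel X R) s x := connect_trans sa (connect1 ax).
apply: connect_trans (connect1 _) (IHp x path_p sx ps).
have /and3P [aX xX Rax] := ax.
by rewrite /restr_rel !inE aX xX Rax sa sx xs (connect_trans (connect1 ax) xs).
Qed.

Lemma scc_of_SCC X s : s \in X -> is_SCC X R (scc_of X s).
Proof.
move=> sX; split; first exact: scc_of_sub.
  move=> a b; rewrite !inE => /and3P [_ sa as_] /and3P [_ sb bs].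
  exact: connect_scc_of sa (connect_trans as_ sb) bs.
move=> Z sccZ ZX scZ; apply/eqP; rewrite eqEsubset sccZ andbT.
have sZ : s \in Z by apply: (subsetP sccZ); rewrite inE sX !connect0.
apply/subsetP => z zZ; rewrite inE (subsetP ZX _ zZ).
by rewrite !(connect_restr_sub ZX) ?scZ.
Qed.

Lemma attackers_ofS X S1 S2 :
  S1 \subset S2 -> attackers_of X R S1 \subset attackers_of X R S2.
Proof.
move=> S12; apply/subsetP => a; rewrite !inE => /andP [-> /existsP [b /andP [bS Rab]]].
by apply/existsP; exists b; rewrite (subsetP S12 _ bS).
Qed.

Lemma admissible_restrE X Y S : Y \subset X -> S \subset Y ->
  attackers_of X R S \subset Y -> admissible X R S <-> admissible Y R S.
Proof.
move=> YX SY attY; split=> -[_ cfS defS]; split=> //.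
- by move=> a b aS bY; apply: defS aS (subsetP YX _ bY).
- exact: subset_trans SY YX.
move=> a b aS bX Rba.
have bY : b \in Y.
  by apply: (subsetP attY); rewrite inE bX; apply/existsP; exists a; rewrite aS.
exact: defS aS bY Rba.
Qed.

Lemma initial_set_restrE X Y S : Y \subset X -> S \subset Y ->
  attackers_of X R S \subset Y -> initial_set X R S <-> initial_set Y R S.
Proof.
move=> YX SY attY.
have admE S' : S' \subset S -> admissible X R S' <-> admissible Y R S'.
  move=> S'S; apply: admissible_restrE => //; first exact: subset_trans S'S SY.
  exact: subset_trans (attackers_ofS X S'S) attY.
split=> -[S0 admS minS]; split=> // [|S' S'S S'0].
- exact/admE.
- by move/(admE S' (proper_sub S'S)); apply: minS.
- exact/admE.
- by move/(admE S' (proper_sub S'S)); apply: minS.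
Qed.

Lemma admissible_reaching X S s :
  admissible X R S -> admissible X R [set u in S | connect (restr_rel X R) u s].
Proof.
move=> [SX cfS defS].
have S'S : [set u in S | connect (restr_rel X R) u s] \subset S.
  by rewrite setIdE subsetIl.
split; first exact: subset_trans S'S SX.
  by move=> a b /(subsetP S'S) aS /(subsetP S'S) bS; apply: cfS.
move=> a b; rewrite inE => /andP [aS as_] bX Rba.
have [c cS Rcb] := defS a b aS bX Rba.
exists c; rewrite // inE cS /=.
have cb : restr_rel X R c b by rewrite /restr_rel (subsetP SX _ cS) bX.
have ba : restr_rel X R b a by rewrite /restr_rel (subsetP SX _ aS) bX.
exact: connect_trans (connect1 cb) (connect_trans (connect1 ba) as_).
Qed.

Lemma initial_set_connect X S s t :
  initial_set X R S -> t \in S -> s \in S -> connect (restr_rel X R) t s.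
Proof.
move=> [_ admS minS] tS sS.
set S' := [set u in S | connect (restr_rel X R) u s].
have S'S : S' \subset S by rewrite /S' setIdE subsetIl.
suff /subsetP/(_ t tS) : S \subset S' by rewrite inE => /andP [].
apply: contraT => SS'; case: (minS S'); first by rewrite properE S'S.
  by apply/set0Pn; exists s; rewrite inE sS connect0.
exact: admissible_reaching.
Qed.

Lemma initial_set_sub_scc_of X S s :
  S \subset X -> initial_set X R S -> s \in S -> S \subset scc_of X s.
Proof.
move=> SX iniS sS; apply/subsetP => t tS.
by rewrite inE (subsetP SX _ tS) !(initial_set_connect iniS).
Qed.

Lemma attackers_of_sub_scc_of X S s :
  S \subset X -> initial_set X R S -> s \in S ->
  attackers_of X R S \subset scc_of X s.
Proof.
move=> SX iniS sS; have [_ [_ _ defS] _] := iniS.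
apply/subsetP => a; rewrite inE => /andP [aX /existsP [b /andP [bS Rab]]].
have [c cS Rca] := defS b a bS aX Rab.
have ca : restr_rel X R c a by rewrite /restr_rel (subsetP SX _ cS) aX.
have ab : restr_rel X R a b by rewrite /restr_rel (subsetP SX _ bS) aX.
rewrite inE aX (connect_trans (initial_set_connect iniS sS cS) (connect1 ca)).
exact: connect_trans (connect1 ab) (initial_set_connect iniS bS sS).
Qed.

End InitialSets.

Theorem proposition2 (T : finType) (X : {set T}) (R : rel T) (S : {set T}) :
  S \subset X ->
  (initial_set X R S <->
   exists Y : {set T},
     [/\ is_SCC X R Y, S \subset Y, initial_set Y R S &
         attackers_of X R S \subset Y]).
Proof.
move=> SX; split=> [iniS | [Y [[YX _ _] SY iniYS attY]]].
- have [/set0Pn [s sS] _ _] := iniS.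
  have SY := initial_set_sub_scc_of SX iniS sS.
  have attY := attackers_of_sub_scc_of SX iniS sS.
  exists (scc_of R X s); split=> //.
    exact/scc_of_SCC/(subsetP SX).
  exact/(initial_set_restrE (scc_of_sub R X s) SY attY).
- exact/(initial_set_restrE YX SY attY).
Qed.
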